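(* Let $X$ be a complex Banach space and $T:X\to X$ a uniformly rigid bounded linear operator. Then $\sigma(T)\subseteq\mathbb T=\{z\in\mathbb C:|z|=1\}$. In particular, $T$ is invertible.
   Context: $T$ is called uniformly rigid if there is an increasing sequence of positive integers $(k_n)$ with $\|T^{k_n}-I\|\to 0$. *)

From HB Require Import structures.
From mathcomp Require Import all_boot all_order all_algebra.
From mathcomp Require Import all_classical all_reals all_analysis.
From mathcomp.real_closed Require Import complex.
Set Implicit Arguments. Unset Strict Implicit. Unset Printing Implicit Defensive.
Import Order.TTheory GRing.Theory Num.Theory.
Import numFieldNormedType.Exports.
Local Open Scope ring_scope.
Local Open Scope classical_set_scope.

Section Ops.
Variables (R : realType) (X : completeNormedModType R[i]).

(* bounded (= continuous) linear operator on X *)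
Definition bounded_linear (T : X -> X) : Prop :=
  linear T /\ continuous T.

Definition invertible_op (A : X -> X) : Prop :=
  exists S : X -> X, bounded_linear S /\ S \o A = id /\ A \o S = id.

Definition spectrum (T : X -> X) : set R[i] :=
  [set lam | ~ invertible_op (fun x => T x - lam *: x)].

(* ||A|| <= e  unfolded:  forall x, |A x| <= e |x|.
   ||T^(k n) - I|| -> 0 as n -> oo. *)
Definition uniformly_rigid (T : X -> X) : Prop :=
  exists k : nat -> nat, (forall n, (k n < k n.+1)%N) /\ (0 < k 0)%N /\
    forall eps : R, 0 < eps ->
      exists N, forall n, (N <= n)%N -> forall x : X,
        `|iter (k n) T x - x| <= (eps%:C)%C * `|x|.
End Ops.

(* For |λ| ≠ 1 put d = |1 - |λ||. Uniform rigidity gives m = k_N with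
   ||T^m - I|| ≤ d/2, while |1 - λ^m| ≥ d. Hence
   T^m - λ^m = (1 - λ^m) I + (T^m - I) is a small perturbation of a nonzero
   multiple of the identity, so it is invertible (its inverse is found with the
   contraction principle). Since T^m - λ^m = (T - λ) P(T) = P(T) (T - λ) for a
   polynomial P, the operator T - λ is invertible as well. The case λ = 0 is
   the invertibility of T. *)
From HB Require Import structures.
From mathcomp Require Import all_boot all_order all_algebra.
From mathcomp Require Import all_classical all_reals all_analysis.
From mathcomp.real_closed Require Import complex.
From mathcomp.algebra_tactics Require Import ring.
Import Order.TTheory GRing.Theory Num.Theory.
Import numFieldNormedType.Exports.
Local Open Scope ring_scope.
Local Open Scope classical_set_scope.

Lemma complex_nat_gt (R : realType) (z : R[i]) :
  0 <= z -> exists n : nat, z < n%:R.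
Proof.
move=> z_ge0; have z_real : z \is Num.real by exact: ger0_real.
exists (Num.truncn (complex.Re z)).+1.
rewrite -(RRe_real z_real) -[_.+1%:R](rmorph_nat (@complex.real_complex R)).
by rewrite ltcR truncnS_gt.
Qed.

Lemma norm1B_le_norm1BX (R : realType) (lam : R[i]) m : (0 < m)%N ->
  `|1 - `|lam| | <= `|1 - lam ^+ m|.
Proof.
move=> m_gt0; apply: le_trans (ler_dist_dist _ _).
rewrite normr1 normrX; move: (normr_ge0 lam); move: `|lam| => r r_ge0.
case/orP: (real_leVge (ger0_real r_ge0) (real1 R[i])) => r1.
  have rm_le1 : r ^+ m <= 1 := le_trans (ler_iXnr m_gt0 r_ge0 r1) r1.
  by rewrite !ger0_norm ?subr_ge0 // lerD2l lerN2 ler_iXnr.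
have rm_ge1 : 1 <= r ^+ m := le_trans r1 (ler_eXnr m_gt0 r1).
by rewrite !ler0_norm ?subr_le0 // !opprB lerD2r ler_eXnr.
Qed.

Section HalfContraction.
Variables (R : realType) (X : completeNormedModType R[i]) (f : X -> X).
Hypothesis f_half : forall x y, `|f x - f y| <= 2^-1 * `|x - y|.

Let q : R[i] := 2^-1.
Let u n := iter n f 0.
Let D := `|f 0|.

Lemma half_contraction_dist n m :
  `|u n - u (n + m)%N| + 2 * q ^+ (n + m) * D <= 2 * q ^+ n * D.
Proof.
have q_ge0 : 0 <= q by rewrite invr_ge0.
have step k : `|u k.+1 - u k| <= q ^+ k * D.
  elim: k => [|k IH]; first by rewrite /u /= subr0 expr0 mul1r.
  rewrite /u !iterS -/(u k.+1) -/(u k).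
  by apply: (le_trans (f_half _ _)); rewrite exprS -mulrA ler_wpM2l.
elim: m => [|m IH]; first by rewrite addn0 subrr normr0 add0r.
apply: le_trans IH; rewrite addnS.
have -> : 2 * q ^+ (n + m).+1 * D = q ^+ (n + m) * D.
  by rewrite exprS mulrA mulfV ?mul1r ?pnatr_eq0.
apply: (le_trans (lerD (ler_distD (u (n + m)) _ _) (lexx _))).
rewrite -addrA lerD2l distrC.
have -> : 2 * q ^+ (n + m) * D = q ^+ (n + m) * D + q ^+ (n + m) * D by ring.
by rewrite lerD2r.
Qed.

Lemma half_contraction_cvg : cvgn u.
Proof.
apply/cauchy_cvgP/cauchy_exP => eps eps_gt0.
have D_ge0 : 0 <= D := normr_ge0 _.
have [N ltN] := @complex_nat_gt R _
  (divr_ge0 (mulr_ge0 (ler0n _ 2) D_ge0) (ltW eps_gt0)).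
exists (u N), N => // j /= Nj; rewrite -ball_normE /=.
have -> : j = (N + (j - N))%N by rewrite subnKC.
apply: le_lt_trans (_ : 2 * q ^+ N * D < eps).
  apply: le_trans (half_contraction_dist N (j - N)).
  by rewrite lerDl !mulr_ge0 // exprn_ge0 // invr_ge0.
have N_le_2N : (N%:R : R[i]) <= 2 ^+ N by rewrite -natrX ler_nat ltnW // ltn_expl.
rewrite /q exprVn mulrAC ltr_pdivrMr ?exprn_gt0 //.
move: ltN; rewrite ltr_pdivrMr // => ltN.
by apply: (lt_le_trans ltN); rewrite mulrC ler_wpM2l // ltW.
Qed.

Lemma half_contraction_fixpoint : exists p, f p = p.
Proof.
pose p := limn u.
have f_cont : {for p, continuous f}.
  apply/cvgrPdist_lt => e e_gt0; near=> z.
  apply: (le_lt_trans (f_half _ _)).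
  rewrite -ltr_pdivlMl ?invr_gt0 // invrK; near: z.
  by apply: cvgr_dist_lt => //; rewrite mulr_gt0.
have fu_fp : (f \o u) @ \oo --> f p.
  by apply: continuous_cvg => //; exact: half_contraction_cvg.
have fu_p : (f \o u) @ \oo --> p.
  have -> : f \o u = (fun n => u n.+1) by apply/funext.
  by rewrite (cvg_shiftS u); exact: half_contraction_cvg.
exists p; rewrite -(cvg_lim (@norm_hausdorff _ _) fu_fp).
by rewrite (cvg_lim (@norm_hausdorff _ _) fu_p).
Unshelve. all: by end_near. Qed.

End HalfContraction.

Section Operators.
Variables (R : realType) (X : completeNormedModType R[i]).

Lemma linear_continuous_of_bound (f : X -> X) (M : R[i]) : linear f -> 0 < M ->
  (forall x, `|f x| <= M * `|x|) -> continuous f.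
Proof.
move=> linf M_gt0 f_bound x; apply/cvgrPdist_lt => e e_gt0; near=> z.
rewrite -(zmod_morphism_linear linf); apply: le_lt_trans (f_bound _) _.
rewrite -ltr_pdivlMl //; near: z; apply: cvgr_dist_lt => //.
by rewrite mulrC divr_gt0.
Unshelve. all: by end_near. Qed.

Lemma bounded_below_surjective_invertible (B : X -> X) (M : R[i]) :
  linear B -> 0 < M -> (forall x, `|x| <= M * `|B x|) ->
  (forall y, exists x, B x = y) -> invertible_op B.
Proof.
move=> linB M_gt0 B_below B_onto; have [S BS] := choice B_onto.
have B_inj x y : B x = B y -> x = y.
  move=> Bxy; apply/eqP; rewrite -subr_eq0 -normr_le0.
  apply: le_trans (B_below _) _.
  by rewrite (zmod_morphism_linear linB) Bxy subrr normr0 mulr0.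
have SB x : S (B x) = x by apply: B_inj; rewrite BS.
have linS : linear S by move=> a u v; apply: B_inj; rewrite linB !BS.
exists S; split; last by split; apply/funext => x /=; rewrite ?SB ?BS.
have S_bound y : `|S y| <= M * `|y| by rewrite -{2}(BS y) B_below.
by split=> //; exact: linear_continuous_of_bound linS M_gt0 S_bound.
Qed.

Section Perturbation.
Variables (A : X -> X) (c : R[i]).
Hypotheses (linA : linear A) (c_neq0 : c != 0).
Hypothesis A_small : forall x, `|A x| <= `|c| / 2 * `|x|.
HB.instance Definition _ := GRing.isLinear.Build R[i] X X *:%R A linA.

Lemma linear_scale_add : linear (fun x => c *: x + A x).
Proof.
by move=> a u v; rewrite [A _]linearP !scalerDr !scalerA [c * a]mulrC addrACA.
Qed.

Lemma scale_add_bounded_below x : `|x| <= 2 / `|c| * `|c *: x + A x|.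
Proof.
have c_gt0 : 0 < `|c| by rewrite normr_gt0.
have cx_le : `|c| * `|x| <= `|c *: x + A x| + `|c| / 2 * `|x|.
  rewrite -normrZ -{1}(addrK (A x) (c *: x)).
  by apply: le_trans (ler_normB _ _) _; rewrite lerD2l.
have half_le : `|c| / 2 * `|x| <= `|c *: x + A x|.
  by rewrite -(lerD2r (`|c| / 2 * `|x|)) -mulrDl -splitr.
rewrite mulrAC ler_pdivlMr // mulrC {1}[`|c|]splitr mulrDl mulr_natl mulr2n.
exact: lerD.
Qed.

Lemma scale_add_surjective y : exists x, c *: x + A x = y.
Proof.
pose g x := c^-1 *: (y - A x).
have [p gp] : exists p, g p = p.
  apply: half_contraction_fixpoint => u v.
  rewrite /g -scalerBr opprD opprK addrACA subrr add0r addrC -linearB.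
  rewrite normrZ normrV ?unitfE //.
  apply: le_trans (ler_wpM2l _ (A_small _)) _; first by rewrite invr_ge0.
  by rewrite distrC !mulrA mulVf ?normr_eq0 // mul1r.
by exists p; rewrite -{1}gp /g scalerA mulfV // scale1r subrK.
Qed.

Lemma scale_add_invertible : invertible_op (fun x => c *: x + A x).
Proof.
apply: (@bounded_below_surjective_invertible _ (2 / `|c|)).
- exact: linear_scale_add.
- by rewrite divr_gt0 // normr_gt0.
- exact: scale_add_bounded_below.
- exact: scale_add_surjective.
Qed.

End Perturbation.

(* [geom_sum_op T lam k] is the operator sum_(j < k) lam^j T^(k-1-j), so that
   T^k - lam^k = (T - lam) P = P (T - lam). *)
Fixpoint geom_sum_op (T : X -> X) (lam : R[i]) (k : nat) (x : X) : X :=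
  if k is k'.+1 then T (geom_sum_op T lam k' x) + lam ^+ k' *: x else 0.

Section PowerFactorization.
Variables (T : X -> X) (lam : R[i]).
Hypothesis linT : linear T.
HB.instance Definition _ := GRing.isLinear.Build R[i] X X *:%R T linT.

Lemma linear_iter k : linear (iter k T).
Proof. by elim: k => [|k IH] a u v //=; rewrite IH linearP. Qed.

Lemma linear_geom_sum_op k : linear (geom_sum_op T lam k).
Proof.
elim: k => [|k IH] a u v /=; first by rewrite scaler0 addr0.
rewrite IH linearP !scalerDr !scalerA [lam ^+ k * a]mulrC.
by rewrite addrACA.
Qed.

Lemma continuous_geom_sum_op k : continuous T -> continuous (geom_sum_op T lam k).
Proof.
move=> contT; elim: k => [|k IH] x /=; first exact: cvg_cst.
apply: (@continuousD _ _ _ (T \o geom_sum_op T lam k)).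
  exact: continuous_comp (IH x) (contT _).
exact: scaler_continuous.
Qed.

Lemma sub_geom_sum_op k x :
  T (geom_sum_op T lam k x) - lam *: geom_sum_op T lam k x =
  iter k T x - lam ^+ k *: x.
Proof.
elim: k => [|k IH] /=; first by rewrite raddf0 scaler0 subr0 expr0 scale1r subrr.
set P := geom_sum_op T lam k x.
have -> : iter k T x = T P - lam *: P + lam ^+ k *: x by rewrite IH subrK.
rewrite [in RHS]linearD [in RHS]linearB /= !(scalable_linear linT).
rewrite [T (_ + _)]linearD /= (scalable_linear linT) exprS -scalerA scalerDr.
by rewrite opprD addrA [_ + lam ^+ k *: T x - _]addrAC.
Qed.

Lemma geom_sum_op_sub k x :
  geom_sum_op T lam k (T x - lam *: x) = iter k T x - lam ^+ k *: x.
Proof.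
elim: k => [|k IH] /=; first by rewrite expr0 scale1r subrr.
rewrite IH linearB linearZ exprS scalerBr !scalerA [lam ^+ k * lam]mulrC.
by rewrite addrA subrK.
Qed.

Lemma invertible_sub_of_pow k : continuous T ->
  invertible_op (fun x => iter k T x - lam ^+ k *: x) ->
  invertible_op (fun x => T x - lam *: x).
Proof.
move=> contT [S [[linS contS] [SQ QS]]].
pose P := geom_sum_op T lam k.
have right_inv y : T (P (S y)) - lam *: P (S y) = y.
  by rewrite /P sub_geom_sum_op; exact: (congr1 (fun f => f y) QS).
have left_inv x : S (P (T x - lam *: x)) = x.
  by rewrite /P geom_sum_op_sub; exact: (congr1 (fun f => f x) SQ).
exists (P \o S); split.
  split; first by move=> a u v /=; rewrite linS /P linear_geom_sum_op.
  by move=> x; exact: continuous_comp (contS x) (continuous_geom_sum_op k contT _).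
split; apply/funext => x /=; last exact: right_inv.
by rewrite -[LHS]left_inv right_inv left_inv.
Qed.

End PowerFactorization.

Lemma uniformly_rigid_sub_invertible (T : X -> X) (lam : R[i]) :
  bounded_linear T -> uniformly_rigid T -> `|lam| != 1 ->
  invertible_op (fun x => T x - lam *: x).
Proof.
move=> [linT contT] [k [k_incr [k0_gt0 rigid]]] lam_neq1.
have k_gt0 n : (0 < k n)%N by elim: n => // n IH; exact: ltn_trans IH (k_incr n).
pose d := `|1 - `|lam| |.
have d_gt0 : 0 < d by rewrite normr_gt0 subr_eq0 eq_sym.
pose e := complex.Re (d / 2).
have eE : e%:C%C = d / 2 by apply: RRe_real; rewrite ger0_real // divr_ge0 // ltW.
have e_gt0 : 0 < e by rewrite -ltcR eE divr_gt0.
have [N closeN] := rigid e e_gt0.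
apply: (@invertible_sub_of_pow T lam linT (k N) contT).
pose c := 1 - lam ^+ k N.
have d_le_c : d <= `|c| by exact: norm1B_le_norm1BX.
have -> : (fun x => iter (k N) T x - lam ^+ k N *: x) =
    (fun x => c *: x + (iter (k N) T x - x)).
  by apply/funext => x; rewrite /c scalerBl scale1r [RHS]addrC subrKA.
apply: scale_add_invertible.
- move=> a u v.
  by rewrite (linear_iter _ linT) scalerBr opprD addrACA -addrA.
- by rewrite -normr_gt0; exact: lt_le_trans d_le_c.
- move=> x; apply: le_trans (closeN N (leqnn N) x) _.
  by rewrite eE ler_wpM2r // ler_wpM2r.
Qed.

End Operators.

Theorem proposition2p19 (R : realType) (X : completeNormedModType R[i])
  (T : X -> X) :
  bounded_linear T -> uniformly_rigid T ->
  (spectrum T `<=` [set z : R[i] | `|z| = 1]) /\ invertible_op T.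
Proof.
move=> bT rigT; split.
  move=> lam lam_spec; apply: contrapT => /eqP lam_neq1.
  exact/lam_spec/uniformly_rigid_sub_invertible.
have -> : T = (fun x => T x - 0 *: x) by apply/funext => x; rewrite scale0r subr0.
by apply: uniformly_rigid_sub_invertible; rewrite // normr0 eq_sym oner_eq0.
Qed.
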